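(* Let $T$ and $A$ be closed Hermitian subspaces in $X^2$ and $S$ a self-adjoint subspace in $X^2$, with $D(T)=D(S)=:D\subset D(A)$ and $T=S+A$, and assume $\rho(T)\cap\rho(S)\neq\emptyset$. Let $Q:A(0)^\perp\to S(0)^\perp$ be the orthogonal projection (note $S(0)^\perp\subset A(0)^\perp$ under these hypotheses). (i) If $QA_s$ is $S_s$-compact, then $T$ is a compact perturbation of $S$. (ii) If $T$ is a compact perturbation of $S$ and $T_s$ is a bounded operator on $D$, then $QA_s$ is $S_s$-compact.
   Context: $X$ is a complex Hilbert space and $X^2=X\times X$ carries the inner product $\langle (x,f),(y,g)\rangle=\langle x,y\rangle+\langle f,g\rangle$. A subspace $T$ in $X^2$ means a linear subspace of $X^2$ (a linear relation); a linear operator in $X$ is identified with its graph. Notation: $D(T)=\{x:(x,f)\in T \text{ for some } f\}$, $T(x)=\{f:(x,f)\in T\}$, $T^{-1}=\{(f,x):(x,f)\in T\}$, $\lambda I$ is the graph of $x\mapsto \lambda x$. The adjoint is $T^*=\{(y,g)\in X^2:\langle g,x\rangle=\langle y,f\rangle \text{ for all }(x,f)\in T\}$; $T$ is Hermitian if $T\subset T^*$ and self-adjoint if $T=T^*$. For subspaces $S,A$ in $X^2$, $S+A=\{(x,f+g):(x,f)\in S,(x,g)\in A\}$. For a closed subspace $T$, set $T_\infty=\{(0,g)\in X^2:(0,g)\in T\}$ and $T_s=T\ominus T_\infty$ (orthogonal complement of $T_\infty$ in $T$), so $T=T_s\oplus T_\infty$; $T_s$ is the graph of a linear operator (the operator part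 of $T$) with $D(T_s)=D(T)$ and $R(T_s)\subset T(0)^\perp$. Resolvent set: $\rho(T)=\{\lambda\in\mathbb C:(\lambda I-T)^{-1}$ is a bounded linear operator defined on all of $X\}$. For linear operators $U,V$ in $X$ with $D(V)\subset D(U)$: $U$ is $V$-compact if $U|_{D(V)}$ is compact as a map from $(D(V),\|\cdot\|_V)$ into $X$, where $\|x\|_V=\|x\|+\|Vx\|$. Compact perturbation: for closed subspaces $T,S$ in $X^2$ with orthogonal projections $P_T,P_S$ of $X^2$ onto $T$, $S$, $T$ is a compact perturbation of $S$ if $P_T-P_S$ is a compact operator. *)

From Stdlib Require Import Reals.
Open Scope R_scope.
Set Implicit Arguments.

Definition Cx : Type := (R * R)%type.
Definition C0 : Cx := (0, 0).
Definition C1 : Cx := (1, 0).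
Definition Cadd (a b : Cx) : Cx := (fst a + fst b, snd a + snd b).
Definition Cmul (a b : Cx) : Cx :=
  (fst a * fst b - snd a * snd b, fst a * snd b + snd a * fst b).
Definition Cconj (a : Cx) : Cx := (fst a, - snd a).
Definition Cre (a : Cx) : R := fst a.

(* Inner product is linear in the first argument, conjugate-linear in the second. *)
Record CHilbert := {
  hcar :> Type;
  hzero : hcar;
  hadd : hcar -> hcar -> hcar;
  hopp : hcar -> hcar;
  hscal : Cx -> hcar -> hcar;
  hinner : hcar -> hcar -> Cx;
  hadd_assoc : forall x y z, hadd x (hadd y z) = hadd (hadd x y) z;
  hadd_comm : forall x y, hadd x y = hadd y x;
  hadd_0 : forall x, hadd x hzero = x;
  hadd_opp : forall x, hadd x (hopp x) = hzero;
  hscal_assoc : forall a b x, hscal a (hscal b x) = hscal (Cmul a b) x;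
  hscal_1 : forall x, hscal C1 x = x;
  hscal_addv : forall a x y, hscal a (hadd x y) = hadd (hscal a x) (hscal a y);
  hscal_adds : forall a b x, hscal (Cadd a b) x = hadd (hscal a x) (hscal b x);
  hinner_addl : forall x y z, hinner (hadd x y) z = Cadd (hinner x z) (hinner y z);
  hinner_scall : forall a x y, hinner (hscal a x) y = Cmul a (hinner x y);
  hinner_conj : forall x y, hinner y x = Cconj (hinner x y);
  hinner_pos : forall x, 0 <= Cre (hinner x x);
  hinner_def : forall x, hinner x x = C0 -> x = hzero;
  hcomplete : forall u : nat -> hcar,
    (forall eps, 0 < eps -> exists N, forall m n, (N <= m)%nat -> (N <= n)%nat ->
        sqrt (Cre (hinner (hadd (u m) (hopp (u n))) (hadd (u m) (hopp (u n))))) < eps) ->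
    exists l, forall eps, 0 < eps -> exists N, forall n, (N <= n)%nat ->
        sqrt (Cre (hinner (hadd (u n) (hopp l)) (hadd (u n) (hopp l)))) < eps
}.

Section Hilb.
Variable X : CHilbert.

Definition vsub (x y : X) : X := hadd X x (hopp X y).
Definition norm (x : X) : R := sqrt (Cre (hinner X x x)).

Definition lim (u : nat -> X) (l : X) : Prop :=
  forall eps, 0 < eps -> exists N, forall n, (N <= n)%nat -> norm (vsub (u n) l) < eps.

Definition X2 : Type := (X * X)%type.
Definition add2 (z w : X2) : X2 := (hadd X (fst z) (fst w), hadd X (snd z) (snd w)).
Definition sub2 (z w : X2) : X2 := (vsub (fst z) (fst w), vsub (snd z) (snd w)).
Definition inner2 (z w : X2) : Cx :=
  Cadd (hinner X (fst z) (fst w)) (hinner X (snd z) (snd w)).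
Definition norm2 (z : X2) : R := sqrt (Cre (inner2 z z)).
Definition lim2 (u : nat -> X2) (l : X2) : Prop :=
  forall eps, 0 < eps -> exists N, forall n, (N <= n)%nat -> norm2 (sub2 (u n) l) < eps.

(* A subspace of X^2 (linear relation) is represented by its membership
   predicate: T x f  means  (x,f) \in T. *)
Definition Rel : Type := X -> X -> Prop.

Definition is_subspace (T : Rel) : Prop :=
  T (hzero X) (hzero X) /\
  (forall x f y g, T x f -> T y g -> T (hadd X x y) (hadd X f g)) /\
  (forall a x f, T x f -> T (hscal X a x) (hscal X a f)).

Definition closed_rel (T : Rel) : Prop :=
  forall (z : nat -> X2) (l : X2),
    (forall n, T (fst (z n)) (snd (z n))) -> lim2 z l -> T (fst l) (snd l).

Definition adj (T : Rel) : Rel :=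
  fun y g => forall x f, T x f -> hinner X g x = hinner X y f.

Definition hermitian (T : Rel) : Prop := forall x f, T x f -> adj T x f.
Definition selfadjoint (T : Rel) : Prop := forall y g, T y g <-> adj T y g.

Definition dom (T : Rel) (x : X) : Prop := exists f, T x f.
Definition img (T : Rel) (x : X) : X -> Prop := fun f => T x f.

Definition rel_sum (S A : Rel) : Rel :=
  fun x h => exists f g, S x f /\ A x g /\ h = hadd X f g.

Definition T_inf (T : Rel) : Rel := fun x g => x = hzero X /\ T (hzero X) g.
Definition op_part (T : Rel) : Rel :=
  fun x f => T x f /\
    (forall y g, T_inf T y g -> inner2 (x, f) (y, g) = C0).

Definition perp (V : X -> Prop) : X -> Prop :=
  fun y => forall v, V v -> hinner X y v = C0.

Definition is_proj_of (V : X -> Prop) (v p : X) : Prop :=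
  V p /\ forall w, V w -> hinner X (vsub v p) w = C0.

Definition is_proj2 (T : Rel) (P : X2 -> X2) : Prop :=
  forall z, T (fst (P z)) (snd (P z)) /\
    (forall x f, T x f -> inner2 (sub2 z (P z)) (x, f) = C0).

(* resolvent set: (lambda I - T)^{-1} is a bounded linear operator on all of X *)
Definition in_resolvent (lam : Cx) (T : Rel) : Prop :=
  (forall y, exists x f, T x f /\ vsub (hscal X lam x) f = y) /\
  (forall x f x' f', T x f -> T x' f' ->
     vsub (hscal X lam x) f = vsub (hscal X lam x') f' -> x = x') /\
  (exists M, forall x f, T x f -> norm x <= M * norm (vsub (hscal X lam x) f)).

Definition strict_incr (phi : nat -> nat) : Prop := forall n, (phi n < phi (Datatypes.S n))%nat.

Definition compact_op2 (K : X2 -> X2) : Prop :=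
  forall (z : nat -> X2) (M : R), (forall n, norm2 (z n) <= M) ->
    exists phi l, strict_incr phi /\ lim2 (fun n => K (z (phi n))) l.

Definition compact_perturbation (T S : Rel) : Prop :=
  forall PT PS, is_proj2 T PT -> is_proj2 S PS ->
    compact_op2 (fun z => sub2 (PT z) (PS z)).

(* U is V-compact (U, V operators given by their graphs, D(V) in D(U)):
   U restricted to D(V) is compact from (D(V), ||.||_V) into X *)
Definition rel_compact (U V : Rel) : Prop :=
  forall (x y u : nat -> X) (M : R),
    (forall n, V (x n) (y n)) -> (forall n, U (x n) (u n)) ->
    (forall n, norm (x n) + norm (y n) <= M) ->
    exists phi l, strict_incr phi /\ lim (fun n => u (phi n)) l.

Definition QAs (S A : Rel) : Rel :=
  fun x q => exists a, op_part A x a /\ is_proj_of (perp (img S (hzero X))) a q.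

Definition bounded_rel (T : Rel) : Prop :=
  exists M, forall x f, T x f -> norm f <= M * norm x.

End Hilb.

(* Let [M = S(0)].  Self-adjointness of [S] gives [M = D(S)^perp], and with the
   hermiticity of [T] also [T(0) = M]; moreover [T x = S_s x + Q A_s x + M].
   (i) Relative compactness of [Q A_s] yields a relative bound
   [|S_s x| <= C (|x| + |S_s x + Q A_s x|)], so for a bounded sequence [z_n] the first
   components of [P_T z_n] and [P_S z_n] are [S_s]-bounded and [Q A_s] of them converges
   along a subsequence.  The identity
   [|P_T z - P_S z|^2 = Re <(z - P_S z)_2, Q A_s (P_T z)_1 - Q A_s (P_S z)_1>
                        + Re <(P_T z - P_S z)_2, Q A_s (P_S z)_1>]
   then makes [(P_T - P_S) z_n] Cauchy along it.
   (ii) For [z = (x, S_s x)] one has [P_S z = z], and with [p = P_T z],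
   [Q A_s x = T_s (x - p_1) - (S_s x - p_2)]; hence [|Q A_s x| <= (|T_s| + 1) |P_T z - P_S z|]. *)

From Stdlib Require Import Reals Lra Lia Psatz ClassicalEpsilon Classical.
Open Scope R_scope.

Arguments vsub {X} x y.
Arguments norm {X} x.
Arguments lim {X} u l.

Definition Copp (a : Cx) : Cx := (- fst a, - snd a).

Lemma Cx_eq (a b : Cx) : fst a = fst b -> snd a = snd b -> a = b.
Proof. destruct a, b; simpl; intros -> ->; reflexivity. Qed.

Ltac cunfold := unfold Cadd, Cmul, Cconj, Copp, C0, C1, Cre in *; cbn [fst snd] in *.
Ltac cring := apply Cx_eq; cunfold; ring.

Section InnerProduct.
Variable H : CHilbert.
Notation "x + y" := (hadd H x y).
Notation "- x" := (hopp H x).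
Notation "<< x , y >>" := (hinner H x y).

Lemma inner_0l (y : H) : << hzero H, y >> = C0.
Proof.
  assert (E : << hzero H + hzero H, y >> = << hzero H, y >>) by (rewrite hadd_0; reflexivity).
  rewrite hinner_addl in E. destruct (<< hzero H, y >>) as [a b].
  unfold Cadd in E; simpl in E. injection E; intros; apply Cx_eq; simpl; lra.
Qed.

Lemma inner_oppl (x y : H) : << - x, y >> = Copp << x, y >>.
Proof.
  assert (E : << x + - x, y >> = C0) by (rewrite hadd_opp; apply inner_0l).
  rewrite hinner_addl in E. destruct (<< x, y >>) as [a b], (<< -x, y >>) as [c d].
  unfold Cadd, C0 in E; simpl in E. injection E; intros. apply Cx_eq; simpl; lra.
Qed.

Lemma inner_addr (x y z : H) : << x, y + z >> = Cadd << x, y >> << x, z >>.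
Proof.
  rewrite hinner_conj, hinner_addl, (hinner_conj H y x), (hinner_conj H z x).
  destruct (<< y, x >>), (<< z, x >>); cring.
Qed.

Lemma inner_scalr (a : Cx) (x y : H) : << x, hscal H a y >> = Cmul (Cconj a) << x, y >>.
Proof.
  rewrite hinner_conj, hinner_scall, (hinner_conj H y x). destruct (<< y, x >>), a; cring.
Qed.

Lemma inner_oppr (x y : H) : << x, - y >> = Copp << x, y >>.
Proof. rewrite hinner_conj, inner_oppl, (hinner_conj H y x). destruct (<< y, x >>); cring. Qed.

Lemma inner_0r (y : H) : << y, hzero H >> = C0.
Proof. rewrite hinner_conj, inner_0l. cring. Qed.

Lemma eq_of_inner_sub0 (u v : H) : (forall y, << u + - v, y >> = C0) -> u = v.
Proof.
  intro E. apply hinner_def in E.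
  rewrite <- (hadd_0 H u), <- (hadd_opp H v), (hadd_comm H v), hadd_assoc, E, hadd_comm.
  apply hadd_0.
Qed.

End InnerProduct.

Ltac inner_expand := repeat (rewrite ?hinner_addl, ?inner_addr, ?hinner_scall, ?inner_scalr,
  ?inner_oppl, ?inner_oppr, ?inner_0l, ?inner_0r).
Ltac inner_expand_in P := repeat (rewrite ?hinner_addl, ?inner_addr, ?hinner_scall,
  ?inner_scalr, ?inner_oppl, ?inner_oppr, ?inner_0l, ?inner_0r in P).

(* [u = v] is reduced to [<< u - v, y >> = 0] for a fresh [y]; unlike
   [<< u - v, u - v >>], this expands linearly in the size of [u - v]. *)
Ltac vec_eq := apply eq_of_inner_sub0; let y := fresh "y" in intro y;
  unfold vsub; inner_expand; cring.

Section Norm.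
Variable H : CHilbert.
Notation "<< x , y >>" := (hinner H x y).

Lemma im_inner_self (x : H) : snd << x, x >> = 0.
Proof.
  pose proof (hinner_conj H x x) as E. destruct (<< x, x >>) as [a b].
  unfold Cconj in E; simpl in *. injection E; intros; lra.
Qed.

Lemma re_inner_sym (x y : H) : Cre << y, x >> = Cre << x, y >>.
Proof. rewrite hinner_conj. destruct (<< x, y >>); reflexivity. Qed.

Lemma norm_ge0 (x : H) : 0 <= norm x.
Proof. apply sqrt_pos. Qed.

Lemma norm_sq (x : H) : norm x * norm x = Cre << x, x >>.
Proof. apply sqrt_sqrt, hinner_pos. Qed.

Lemma norm_le_of_sq (x : H) (r : R) : 0 <= r -> Cre << x, x >> <= r * r -> norm x <= r.
Proof.
  intros Hr Hle. unfold norm. rewrite <- (sqrt_square r Hr). apply sqrt_le_1_alt. lra.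
Qed.

Lemma norm_lt_of_sq (x : H) (r : R) : 0 <= r -> Cre << x, x >> < r * r -> norm x < r.
Proof.
  intros Hr Hlt. unfold norm. rewrite <- (sqrt_square r Hr). apply sqrt_lt_1_alt.
  split; [apply hinner_pos | lra].
Qed.

Lemma cauchy_schwarz (x y : H) : Cre << x, y >> <= norm x * norm y.
Proof.
  set (a := Cre << x, x >>); set (b := Cre << x, y >>); set (c := Cre << y, y >>).
  assert (Q : forall t, 0 <= a + 2 * t * b + t * t * c).
  { intro t. pose proof (hinner_pos H (hadd H x (hscal H (t, 0) y))) as P.
    inner_expand_in P. pose proof (re_inner_sym x y). unfold a, b, c in *. cunfold. nra. }
  assert (Ha : 0 <= a) by apply hinner_pos. assert (Hc : 0 <= c) by apply hinner_pos.
  assert (D : b * b <= a * c).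
  { destruct (Req_dec c 0) as [c0 | c0].
    - assert (b = 0); [| nra].
      destruct (Req_dec b 0) as [| nb]; auto. specialize (Q (- (a + 1) / (2 * b))).
      replace (2 * (- (a + 1) / (2 * b)) * b) with (- (a + 1)) in Q by (field; auto).
      rewrite c0 in Q. lra.
    - specialize (Q (- b / c)).
      replace (a + 2 * (- b / c) * b + - b / c * (- b / c) * c) with ((a * c - b * b) / c)
        in Q by (field; auto).
      apply Rmult_le_compat_r with (r := c) in Q; [| lra].
      unfold Rdiv in Q. rewrite Rmult_0_l, Rmult_assoc, Rinv_l, Rmult_1_r in Q; lra. }
  pose proof (norm_sq x) as Nx; pose proof (norm_sq y) as Ny.
  pose proof (norm_ge0 x); pose proof (norm_ge0 y). fold a in Nx; fold c in Ny.
  assert (b * b <= (norm x * norm y) * (norm x * norm y)) by nra.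
  destruct (Rle_dec b (norm x * norm y)) as [| nle]; [auto |].
  assert (0 <= norm x * norm y) by (apply Rmult_le_pos; auto). nra.
Qed.

Lemma norm_opp (x : H) : norm (hopp H x) = norm x.
Proof. unfold norm. f_equal. inner_expand. cunfold. ring. Qed.

Lemma cauchy_schwarz_abs (x y : H) : Rabs (Cre << x, y >>) <= norm x * norm y.
Proof.
  apply Rabs_le. split; [| apply cauchy_schwarz].
  pose proof (cauchy_schwarz (hopp H x) y) as P.
  rewrite inner_oppl, norm_opp in P. cunfold. lra.
Qed.

Lemma norm_triangle (x y : H) : norm (hadd H x y) <= norm x + norm y.
Proof.
  apply norm_le_of_sq; [pose proof (norm_ge0 x); pose proof (norm_ge0 y); lra |].
  pose proof (cauchy_schwarz x y); pose proof (norm_sq x); pose proof (norm_sq y).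
  pose proof (re_inner_sym x y). inner_expand. cunfold. nra.
Qed.

Lemma norm_0 : norm (hzero H) = 0.
Proof. unfold norm. rewrite inner_0l. apply sqrt_0. Qed.

Lemma norm_scal_real (r : R) (x : H) : norm (hscal H (r, 0) x) = Rabs r * norm x.
Proof.
  unfold norm. rewrite <- sqrt_Rsqr_abs, <- sqrt_mult_alt by apply Rle_0_sqr.
  f_equal. inner_expand. cunfold. unfold Rsqr. ring.
Qed.

Lemma norm_sub_sym (x y : H) : norm (vsub x y) = norm (vsub y x).
Proof. unfold norm, vsub. f_equal. inner_expand. cunfold. ring. Qed.

Lemma norm_sub_triangle (x y z : H) : norm (vsub x z) <= norm (vsub x y) + norm (vsub y z).
Proof. replace (vsub x z) with (hadd H (vsub x y) (vsub y z)) by vec_eq. apply norm_triangle. Qed.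

Lemma norm_sub_le (x y : H) : norm (vsub x y) <= norm x + norm y.
Proof. unfold vsub. rewrite <- (norm_opp y). apply norm_triangle. Qed.

Lemma norm_le_add_norm (f q : H) : norm f <= norm (hadd H f q) + norm q.
Proof.
  replace f with (hadd H (hadd H f q) (hopp H q)) at 1 by vec_eq.
  rewrite <- (norm_opp q). apply norm_triangle.
Qed.

Lemma pythagoras (u v : H) : << v, u >> = C0 ->
  Cre << hadd H u v, hadd H u v >> = Cre << u, u >> + Cre << v, v >>.
Proof.
  intro E. inner_expand. rewrite (hinner_conj H v u), E.
  destruct (<< u, u >>), (<< v, v >>). cunfold. ring.
Qed.

Lemma norm_le_add_orth (u v : H) : << v, u >> = C0 ->
  norm u <= norm (hadd H u v) /\ norm v <= norm (hadd H u v).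
Proof.
  intro E. pose proof (pythagoras u v E). pose proof (hinner_pos H u). pose proof (hinner_pos H v).
  unfold norm. split; apply sqrt_le_1_alt; lra.
Qed.

End Norm.

Lemma choice_fun {A0 B0 : Type} (P : A0 -> B0 -> Prop) :
  (forall x, exists y, P x y) -> exists f : A0 -> B0, forall x, P x (f x).
Proof.
  intro Hx. exists (fun x => proj1_sig (constructive_indefinite_description _ (Hx x))).
  intro x. exact (proj2_sig (constructive_indefinite_description _ (Hx x))).
Qed.

Lemma inv_INR_succ_pos (n : nat) : 0 < / (INR n + 1).
Proof. apply Rinv_0_lt_compat. pose proof (pos_INR n). lra. Qed.

Lemma inv_INR_succ_le1 (n : nat) : / (INR n + 1) <= 1.
Proof. rewrite <- Rinv_1. apply Rinv_le_contravar; [lra |]. pose proof (pos_INR n). lra. Qed.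

Lemma inv_INR_succ_small (eps : R) : 0 < eps ->
  exists N : nat, forall n, (N <= n)%nat -> / (INR n + 1) < eps.
Proof.
  intro He. destruct (archimed_cor1 eps He) as [N [HN N0]]. exists N. intros n Hn.
  apply lt_0_INR in N0. apply le_INR in Hn.
  eapply Rle_lt_trans; [| exact HN]. apply Rinv_le_contravar; lra.
Qed.

Lemma abs_le_eps_eq0 (x : R) : (forall eps, 0 < eps -> Rabs x <= eps) -> x = 0.
Proof.
  intro Hx. assert (Rabs x <= 0) by (apply Rle_plus_epsilon; intros; rewrite Rplus_0_l; auto).
  pose proof (Rabs_pos x). destruct (Rcase_abs x);
    [rewrite Rabs_left in * | rewrite Rabs_right in *]; lra.
Qed.

Lemma strict_incr_ge (phi : nat -> nat) : strict_incr phi -> forall n, (n <= phi n)%nat.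
Proof. intros Hp n. induction n; [lia |]. specialize (Hp n). lia. Qed.

Lemma strict_incr_comp (phi psi : nat -> nat) :
  strict_incr phi -> strict_incr psi -> strict_incr (fun n => phi (psi n)).
Proof.
  intros H1 H2 n. assert (Mono : forall a b, (a < b)%nat -> (phi a < phi b)%nat).
  { intros a b Hab. induction Hab; [apply H1 | specialize (H1 m); lia]. }
  apply Mono, H2.
Qed.

Section Limits.
Variable H : CHilbert.
Notation "<< x , y >>" := (hinner H x y).

Definition cauchy (u : nat -> H) : Prop :=
  forall eps, 0 < eps -> exists N, forall m n, (N <= m)%nat -> (N <= n)%nat ->
    norm (vsub (u m) (u n)) < eps.

Lemma cauchy_lim (u : nat -> H) : cauchy u -> exists l, lim u l.
Proof. exact (hcomplete H u). Qed.

Lemma cauchy_of_lim (u : nat -> H) l : lim u l -> cauchy u.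
Proof.
  intros L eps He. destruct (L (eps / 2)) as [N HN]; [lra |]. exists N. intros m n Hm Hn.
  pose proof (norm_sub_triangle H (u m) l (u n)). rewrite (norm_sub_sym H l) in H0.
  pose proof (HN m Hm). pose proof (HN n Hn). lra.
Qed.

Lemma lim_subseq (u : nat -> H) l phi : lim u l -> strict_incr phi -> lim (fun n => u (phi n)) l.
Proof.
  intros L Hp eps He. destruct (L eps He) as [N HN]. exists N. intros n Hn. apply HN.
  pose proof (strict_incr_ge phi Hp n). lia.
Qed.

Lemma re_inner_lim (u : nat -> H) l v : lim u l ->
  forall eps, 0 < eps -> exists N, forall n, (N <= n)%nat ->
    Rabs (Cre << u n, v >> - Cre << l, v >>) <= eps.
Proof.
  intros L eps He. pose proof (norm_ge0 H v).
  destruct (L (eps / (norm v + 1))) as [N HN]; [apply Rdiv_lt_0_compat; lra |].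
  exists N. intros n Hn. specialize (HN n Hn).
  pose proof (cauchy_schwarz_abs H (vsub (u n) l) v) as P.
  unfold vsub in P. rewrite hinner_addl, inner_oppl in P. cunfold.
  eapply Rle_trans; [exact P |].
  apply Rle_trans with (eps / (norm v + 1) * norm v).
  - apply Rmult_le_compat_r; [auto | left; exact HN].
  - apply Rmult_le_reg_r with (norm v + 1); [lra |]. field_simplify; nra.
Qed.

Lemma lim_zero_of_norm_le_inv (u : nat -> H) :
  (forall n, norm (u n) <= / (INR n + 1)) -> lim u (hzero H).
Proof.
  intros Hu eps He. destruct (inv_INR_succ_small eps He) as [N HN]. exists N. intros n Hn.
  replace (vsub (u n) (hzero H)) with (u n) by vec_eq.
  eapply Rle_lt_trans; [apply Hu | apply HN, Hn].
Qed.

Lemma lim_re_inner0 (u : nat -> H) l v :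
  lim u l -> (forall n, Cre << u n, v >> = 0) -> Cre << l, v >> = 0.
Proof.
  intros L Z. apply abs_le_eps_eq0. intros eps He.
  destruct (re_inner_lim u l v L eps He) as [N HN].
  specialize (HN N (le_n N)). rewrite Z, Rminus_0_l, Rabs_Ropp in HN. exact HN.
Qed.

Lemma lim_inner0 (u : nat -> H) l v : lim u l -> (forall n, << u n, v >> = C0) -> << l, v >> = C0.
Proof.
  intros L Z. apply Cx_eq.
  - apply (lim_re_inner0 u); auto. intro n. rewrite Z. reflexivity.
  - assert (E : Cre << l, hscal H (0, 1) v >> = 0).
    { apply (lim_re_inner0 u); auto. intro n. rewrite inner_scalr, Z. cunfold. ring. }
    rewrite inner_scalr in E. cunfold. lra.
Qed.

Definition closed_subset (V : H -> Prop) : Prop :=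
  forall u l, (forall n, V (u n)) -> lim u l -> V l.

Definition subsp (V : H -> Prop) : Prop :=
  V (hzero H) /\ (forall x y, V x -> V y -> V (hadd H x y)) /\
  (forall a x, V x -> V (hscal H a x)).

Lemma subsp_sub (V : H -> Prop) : subsp V -> forall x y, V x -> V y -> V (vsub x y).
Proof.
  intros [_ [VA VS]] x y Hx Hy. replace (vsub x y) with (hadd H x (hscal H (-1, 0) y)) by vec_eq.
  auto.
Qed.

Lemma perp_closed (V : H -> Prop) : closed_subset (perp H V).
Proof. intros u l Hu L w Hw. apply (lim_inner0 u); auto. intro n. apply Hu; auto. Qed.

Lemma perp_subsp (V : H -> Prop) : subsp (perp H V).
Proof.
  unfold perp. split; [| split].
  - intros; apply inner_0l.
  - intros x y Hx Hy v Hv. rewrite hinner_addl, Hx, Hy; auto. cring.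
  - intros a x Hx v Hv. rewrite hinner_scall, Hx; auto. destruct a; cring.
Qed.

Lemma perp_self_eq0 (V : H -> Prop) w : V w -> perp H V w -> w = hzero H.
Proof. intros Vw Pw. apply hinner_def, Pw, Vw. Qed.

Lemma norm_le_add_perp (V : H -> Prop) (u m : H) : perp H V u -> V m -> norm u <= norm (hadd H u m).
Proof. intros Pu Vm. apply norm_le_add_orth. rewrite hinner_conj, (Pu m Vm). cring. Qed.

Lemma perp_of_re (V : H -> Prop) (y : H) : subsp V ->
  (forall w, V w -> Cre << y, w >> = 0) -> perp H V y.
Proof.
  intros [_ [_ VS]] Hr w Hw. apply Cx_eq; [apply Hr; auto |].
  pose proof (Hr _ (VS (0, 1) w Hw)) as E. rewrite inner_scalr in E. cunfold. lra.
Qed.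

(** * The projection theorem *)

Lemma dist_inf_exists (V : H -> Prop) (v : H) : V (hzero H) ->
  exists d, 0 <= d /\ (forall w, V w -> d <= norm (vsub v w)) /\
    (forall eps, 0 < eps -> exists w, V w /\ norm (vsub v w) < d + eps).
Proof.
  intro V0.
  set (E := fun r => exists w, V w /\ r = - norm (vsub v w)).
  assert (EB : bound E) by (exists 0; intros r [w [_ ->]]; pose proof (norm_ge0 H (vsub v w)); lra).
  destruct (completeness E EB (ex_intro _ _ (ex_intro _ (hzero H) (conj V0 eq_refl))))
    as [L [LU LL]].
  exists (- L). split; [| split].
  - assert (L <= 0); [| lra]. apply LL. intros r [w [_ ->]]. pose proof (norm_ge0 H (vsub v w)). lra.
  - intros w Hw. assert (- norm (vsub v w) <= L) by (apply LU; exists w; auto). lra.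
  - intros eps He. apply not_all_not_ex. intro NA.
    assert (L <= L - eps); [| lra]. apply LL. intros r [w [Hw ->]].
    specialize (NA w). apply not_and_or in NA. destruct NA as [NA | NA]; [contradiction |].
    apply Rnot_lt_le in NA. lra.
Qed.

Lemma parallelogram_mid (v x y : H) :
  Cre << vsub x y, vsub x y >> = 2 * Cre << vsub v x, vsub v x >> + 2 * Cre << vsub v y, vsub v y >>
    - 4 * Cre << vsub v (hscal H (/ 2, 0) (hadd H x y)), vsub v (hscal H (/ 2, 0) (hadd H x y)) >>.
Proof. unfold vsub. inner_expand. cunfold. field. Qed.

Lemma minimizing_seq_cauchy (V : H -> Prop) (v : H) (d : R) (ws : nat -> H) : subsp V ->
  0 <= d -> (forall w, V w -> d <= norm (vsub v w)) ->
  (forall n, V (ws n) /\ norm (vsub v (ws n)) < d + / (INR n + 1)) -> cauchy ws.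
Proof.
  intros SV d0 Dlow Hws.
  assert (Par : forall m n, Cre << vsub (ws m) (ws n), vsub (ws m) (ws n) >> <=
      2 * (d + / (INR m + 1)) * (d + / (INR m + 1)) + 2 * (d + / (INR n + 1)) * (d + / (INR n + 1))
      - 4 * d * d).
  { intros m n. destruct (Hws m) as [Vm Nm], (Hws n) as [Vn Nn].
    destruct SV as [_ [VA VS]].
    pose proof (Dlow _ (VS (/ 2, 0) _ (VA _ _ Vm Vn))) as Dm.
    rewrite parallelogram_mid with (v := v), <- !norm_sq.
    pose proof (norm_ge0 H (vsub v (ws m))); pose proof (norm_ge0 H (vsub v (ws n))).
    pose proof (inv_INR_succ_pos m); pose proof (inv_INR_succ_pos n). nra. }
  intros eps He.
  destruct (inv_INR_succ_small (eps * eps / (8 * d + 8))) as [N HN]; [apply Rdiv_lt_0_compat; nra |].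
  exists N. intros m n Hm Hn. apply norm_lt_of_sq; [lra |].
  pose proof (HN m Hm); pose proof (HN n Hn); pose proof (Par m n).
  pose proof (inv_INR_succ_pos m); pose proof (inv_INR_succ_pos n).
  pose proof (inv_INR_succ_le1 m); pose proof (inv_INR_succ_le1 n).
  assert (eps * eps / (8 * d + 8) * (8 * d + 8) = eps * eps) by (field; lra).
  nra.
Qed.

(* Variational characterisation: comparing with the competitors [p + t w]. *)
Lemma nearest_point_orth (V : H -> Prop) (v p : H) : subsp V -> V p ->
  (forall w, V w -> norm (vsub v p) <= norm (vsub v w)) -> forall w, V w -> << vsub v p, w >> = C0.
Proof.
  intros SV Vp Dlow. apply perp_of_re; auto. intros w Hw.
  destruct SV as [_ [VA VS]].
  set (c := Cre << vsub v p, w >>). set (W := Cre << w, w >>).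
  assert (Q : forall t, 0 <= t * t * W - 2 * t * c).
  { intro t. pose proof (Dlow _ (VA _ _ Vp (VS (t, 0) w Hw))) as Dt.
    assert (Ex : Cre << vsub v (hadd H p (hscal H (t, 0) w)), vsub v (hadd H p (hscal H (t, 0) w)) >>
      = Cre << vsub v p, vsub v p >> - 2 * t * c + t * t * W).
    { pose proof (re_inner_sym H (vsub v p) w) as Sym. unfold c, W, vsub in *.
      inner_expand. inner_expand_in Sym. cunfold. nra. }
    rewrite <- !norm_sq in Ex. pose proof (norm_ge0 H (vsub v p)).
    pose proof (norm_ge0 H (vsub v (hadd H p (hscal H (t, 0) w)))). nra. }
  assert (W0 : 0 <= W) by apply hinner_pos.
  specialize (Q (c / (W + 2))).
  replace (c / (W + 2) * (c / (W + 2)) * W - 2 * (c / (W + 2)) * c)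
    with (- c * c * (W + 4) / ((W + 2) * (W + 2))) in Q by (field; lra).
  assert (0 <= - c * c * (W + 4)); [| nra].
  apply Rmult_le_reg_r with (/ ((W + 2) * (W + 2))); [apply Rinv_0_lt_compat; nra |].
  rewrite Rmult_0_l. exact Q.
Qed.

Lemma proj_exists (V : H -> Prop) : subsp V -> closed_subset V -> forall v, exists p, is_proj_of H V v p.
Proof.
  intros SV CV v.
  destruct (dist_inf_exists V v (proj1 SV)) as [d [d0 [Dlow Dapp]]].
  destruct (choice_fun (fun n w => V w /\ norm (vsub v w) < d + / (INR n + 1))) as [ws Hws].
  { intro n. apply Dapp, inv_INR_succ_pos. }
  destruct (cauchy_lim ws (minimizing_seq_cauchy V v d ws SV d0 Dlow Hws)) as [p Lp].
  assert (Vp : V p) by (apply (CV ws p); auto; intro n; apply Hws).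
  exists p. split; auto. apply nearest_point_orth; auto.
  intros w Hw. apply Rle_trans with d; auto. apply Rle_plus_epsilon. intros eps He.
  destruct (Lp (eps / 2)) as [N1 HN1]; [lra |].
  destruct (inv_INR_succ_small (eps / 2)) as [N2 HN2]; [lra |].
  specialize (HN1 (max N1 N2) (Nat.le_max_l _ _)). specialize (HN2 (max N1 N2) (Nat.le_max_r _ _)).
  pose proof (norm_sub_triangle H v (ws (max N1 N2)) p). destruct (Hws (max N1 N2)). lra.
Qed.

End Limits.

(** * The Hilbert space [X^2] and linear relations *)

Section Product.
Variable X : CHilbert.

Definition opp2 (z : X2 X) : X2 X := (hopp X (fst z), hopp X (snd z)).
Definition scal2 (a : Cx) (z : X2 X) : X2 X := (hscal X a (fst z), hscal X a (snd z)).

Lemma pair_eq (z w : X2 X) : fst z = fst w -> snd z = snd w -> z = w.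
Proof. destruct z, w; simpl; intros -> ->; reflexivity. Qed.

Lemma norm_fst_le (z : X2 X) : norm (fst z) <= norm2 z.
Proof.
  unfold norm, norm2. apply sqrt_le_1_alt. unfold inner2.
  pose proof (hinner_pos X (snd z)). cunfold. lra.
Qed.

Lemma norm_snd_le (z : X2 X) : norm (snd z) <= norm2 z.
Proof.
  unfold norm, norm2. apply sqrt_le_1_alt. unfold inner2.
  pose proof (hinner_pos X (fst z)). cunfold. lra.
Qed.

Lemma norm2_le (z : X2 X) : norm2 z <= norm (fst z) + norm (snd z).
Proof.
  unfold norm2. pose proof (norm_sq X (fst z)); pose proof (norm_sq X (snd z)).
  pose proof (norm_ge0 X (fst z)); pose proof (norm_ge0 X (snd z)).
  rewrite <- (sqrt_square (norm (fst z) + norm (snd z))) by lra.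
  apply sqrt_le_1_alt. unfold inner2. cunfold. nra.
Qed.

Lemma norm2_swap (a b : X) : norm2 (a, b) = norm2 (b, a).
Proof. unfold norm2, inner2. simpl. f_equal. destruct (hinner X a a), (hinner X b b). cunfold. ring. Qed.

Lemma prod_complete (u : nat -> X2 X) :
    (forall eps, 0 < eps -> exists N, forall m n, (N <= m)%nat -> (N <= n)%nat ->
        sqrt (Cre (inner2 (add2 (u m) (opp2 (u n))) (add2 (u m) (opp2 (u n))))) < eps) ->
    exists l, forall eps, 0 < eps -> exists N, forall n, (N <= n)%nat ->
        sqrt (Cre (inner2 (add2 (u n) (opp2 l)) (add2 (u n) (opp2 l)))) < eps.
Proof.
  intro Cu.
  destruct (cauchy_lim X (fun n => fst (u n))) as [l1 L1].
  { intros eps He. destruct (Cu eps He) as [N HN]. exists N. intros m n Hm Hn.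
    eapply Rle_lt_trans; [| apply (HN m n Hm Hn)]. apply (norm_fst_le (sub2 (u m) (u n))). }
  destruct (cauchy_lim X (fun n => snd (u n))) as [l2 L2].
  { intros eps He. destruct (Cu eps He) as [N HN]. exists N. intros m n Hm Hn.
    eapply Rle_lt_trans; [| apply (HN m n Hm Hn)]. apply (norm_snd_le (sub2 (u m) (u n))). }
  exists (l1, l2). intros eps He.
  destruct (L1 (eps / 2)) as [N1 H1]; [lra |]. destruct (L2 (eps / 2)) as [N2 H2]; [lra |].
  exists (max N1 N2). intros n Hn.
  pose proof (H1 n ltac:(lia)); pose proof (H2 n ltac:(lia)).
  pose proof (norm2_le (sub2 (u n) (l1, l2))).
  change (norm2 (sub2 (u n) (l1, l2)) < eps). simpl fst in *. simpl snd in *. lra.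
Qed.

Definition prod_hilbert : CHilbert.
Proof.
  refine {| hcar := X2 X; hzero := (hzero X, hzero X); hadd := @add2 X; hopp := opp2;
            hscal := scal2; hinner := @inner2 X; hcomplete := prod_complete |}.
  - intros; apply pair_eq; simpl; apply hadd_assoc.
  - intros; apply pair_eq; simpl; apply hadd_comm.
  - intros; apply pair_eq; simpl; apply hadd_0.
  - intros; apply pair_eq; simpl; apply hadd_opp.
  - intros; apply pair_eq; simpl; apply hscal_assoc.
  - intros; apply pair_eq; simpl; apply hscal_1.
  - intros; apply pair_eq; simpl; apply hscal_addv.
  - intros; apply pair_eq; simpl; apply hscal_adds.
  - intros; unfold inner2; simpl. rewrite !hinner_addl.
    destruct (hinner X _ _), (hinner X _ _), (hinner X _ _), (hinner X _ _). cring.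
  - intros; unfold inner2; simpl. rewrite !hinner_scall.
    destruct (hinner X _ _), (hinner X _ _), a. cring.
  - intros; unfold inner2; simpl. rewrite (hinner_conj X (fst x)), (hinner_conj X (snd x)).
    destruct (hinner X _ _), (hinner X _ _). cring.
  - intros; unfold inner2. pose proof (hinner_pos X (fst x)); pose proof (hinner_pos X (snd x)).
    cunfold. lra.
  - intros x E. unfold inner2 in E.
    pose proof (hinner_pos X (fst x)); pose proof (hinner_pos X (snd x)).
    pose proof (im_inner_self X (fst x)); pose proof (im_inner_self X (snd x)).
    apply pair_eq; simpl; apply hinner_def; apply Cx_eq;
      destruct (hinner X (fst x) (fst x)), (hinner X (snd x) (snd x));
      unfold Cadd, C0, Cre in *; simpl in *; injection E; intros; lra.
Defined.

Lemma norm2_sub_le (u v : X2 X) : norm2 (sub2 u v) <= norm2 u + norm2 v.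
Proof. exact (norm_sub_le prod_hilbert u v). Qed.

End Product.

Section Relations.
Variable X : CHilbert.

Lemma rel_sub (R : Rel X) : is_subspace R -> forall x f y g, R x f -> R y g -> R (vsub x y) (vsub f g).
Proof.
  intros [_ [RA RS]] x f y g Hf Hg.
  replace (vsub x y) with (hadd X x (hscal X (-1, 0) y)) by vec_eq.
  replace (vsub f g) with (hadd X f (hscal X (-1, 0) g)) by vec_eq. auto.
Qed.

Lemma rel_eq (R : Rel X) x f x' f' : R x f -> x = x' -> f = f' -> R x' f'.
Proof. intros ? -> ->; auto. Qed.

Lemma rel_graph_subsp (R : Rel X) : is_subspace R -> subsp (prod_hilbert X) (fun z => R (fst z) (snd z)).
Proof. intros [R0 [RA RS]]. split; [| split]; simpl; auto. Qed.

Lemma img0_subsp (R : Rel X) : is_subspace R -> subsp X (img R (hzero X)).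
Proof.
  intros [R0 [RA RS]]. unfold img. split; [exact R0 | split].
  - intros x y Hx Hy. apply (rel_eq R _ _ _ _ (RA _ _ _ _ Hx Hy)); [vec_eq | auto].
  - intros a x Hx. apply (rel_eq R _ _ _ _ (RS a _ _ Hx)); [vec_eq | auto].
Qed.

Lemma img0_closed (R : Rel X) : closed_rel R -> closed_subset X (img R (hzero X)).
Proof.
  intros CR u l Hu L. apply (CR (fun n => (hzero X, u n)) (hzero X, l)); auto.
  intros eps He. destruct (L eps He) as [N HN]. exists N. intros n Hn.
  eapply Rle_lt_trans; [apply norm2_le |]. simpl.
  replace (vsub (hzero X) (hzero X)) with (hzero X) by vec_eq. rewrite norm_0.
  specialize (HN n Hn). lra.
Qed.

Lemma op_part_iff (R : Rel X) x f :
  op_part R x f <-> R x f /\ perp X (img R (hzero X)) f.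
Proof.
  unfold op_part, T_inf, inner2, perp, img. simpl. split.
  - intros [Hr Ho]. split; auto. intros g Hg. specialize (Ho (hzero X) g (conj eq_refl Hg)).
    simpl in Ho. rewrite inner_0r in Ho. rewrite <- Ho. cring.
  - intros [Hr Ho]. split; auto. intros y g [-> Hg]. simpl. rewrite inner_0r, Ho; auto. cring.
Qed.

Lemma op_part_norm_le (R : Rel X) : is_subspace R -> forall x f g,
  op_part R x f -> R x g -> norm f <= norm g.
Proof.
  intros SR x f g Hf Hg. apply op_part_iff in Hf. destruct Hf as [Hf Pf].
  replace g with (hadd X f (vsub g f)) by vec_eq.
  apply (norm_le_add_perp X (img R (hzero X))); auto.
  apply (rel_eq R _ _ _ _ (rel_sub R SR _ _ _ _ Hg Hf)); [vec_eq | auto].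
Qed.

Lemma dom_subsp (R : Rel X) : is_subspace R -> subsp X (dom R).
Proof.
  intros [R0 [RA RS]]. split; [| split].
  - exists (hzero X). exact R0.
  - intros x y [f Hf] [g Hg]. exists (hadd X f g). auto.
  - intros a x [f Hf]. exists (hscal X a f). auto.
Qed.

Lemma op_part_exists (R : Rel X) : is_subspace R -> closed_rel R ->
  forall x g, R x g -> exists f, op_part R x f.
Proof.
  intros SR CR x g Hg.
  destruct (proj_exists X (img R (hzero X)) (img0_subsp R SR) (img0_closed R CR) g) as [p [Hp Ho]].
  exists (vsub g p). apply op_part_iff. split; [| exact Ho].
  apply (rel_eq R _ _ _ _ (rel_sub R SR _ _ _ _ Hg Hp)); [vec_eq | auto].
Qed.

Lemma op_part_sub (R : Rel X) : is_subspace R -> forall x f y g,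
  op_part R x f -> op_part R y g -> op_part R (vsub x y) (vsub f g).
Proof.
  intros SR x f y g H1 H2. apply op_part_iff in H1, H2. apply op_part_iff.
  destruct H1 as [H1 O1], H2 as [H2 O2].
  split; [apply rel_sub; auto | apply subsp_sub; auto; apply perp_subsp].
Qed.

Lemma op_part_scal (R : Rel X) : is_subspace R -> forall c x f,
  op_part R x f -> op_part R (hscal X c x) (hscal X c f).
Proof.
  intros SR c x f H1. apply op_part_iff in H1. apply op_part_iff. destruct H1 as [H1 O1].
  split; [apply SR; auto | apply perp_subsp; auto].
Qed.

Lemma proj_of_sub (V : X -> Prop) : subsp X V -> forall a q b r,
  is_proj_of X V a q -> is_proj_of X V b r -> is_proj_of X V (vsub a b) (vsub q r).
Proof.
  intros SV a q b r [P1 O1] [P2 O2]. split; [apply subsp_sub; auto |].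
  intros w Hw. replace (vsub (vsub a b) (vsub q r)) with (vsub (vsub a q) (vsub b r)) by vec_eq.
  unfold vsub at 1. rewrite hinner_addl, inner_oppl, O1, O2; auto. cring.
Qed.

Lemma proj_of_scal (V : X -> Prop) : subsp X V -> forall c a q,
  is_proj_of X V a q -> is_proj_of X V (hscal X c a) (hscal X c q).
Proof.
  intros SV c a q [P1 O1]. split; [apply SV; auto |].
  intros w Hw. replace (vsub (hscal X c a) (hscal X c q)) with (hscal X c (vsub a q)) by vec_eq.
  rewrite hinner_scall, O1; auto. destruct c; cring.
Qed.

Lemma adj_closed (R : Rel X) : closed_rel (adj R).
Proof.
  intros z l Hz L x f Hr.
  assert (Q : hinner (prod_hilbert X) (snd l, fst l) (x, hopp X f) = C0).
  { apply (lim_inner0 (prod_hilbert X) (fun n => (snd (z n), fst (z n)))).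
    - intros eps He. destruct (L eps He) as [N HN]. exists N. intros n Hn.
      change (norm2 (vsub (snd (z n)) (snd l), vsub (fst (z n)) (fst l)) < eps).
      rewrite norm2_swap. exact (HN n Hn).
    - intro n. simpl. unfold inner2. simpl. rewrite inner_oppr, (Hz n x f Hr).
      destruct (hinner X (fst (z n)) f). cring. }
  simpl in Q. unfold inner2 in Q. simpl in Q. rewrite inner_oppr in Q.
  destruct (hinner X (snd l) x), (hinner X (fst l) f). unfold Cadd, Copp, C0 in Q. simpl in Q.
  injection Q; intros. apply Cx_eq; simpl; lra.
Qed.

Lemma selfadjoint_hermitian (R : Rel X) : selfadjoint R -> hermitian R.
Proof. intros SA x f Hf. apply SA, Hf. Qed.

Lemma selfadjoint_closed (R : Rel X) : selfadjoint R -> closed_rel R.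
Proof. intros SA z l Hz L. apply SA, (adj_closed R z l); auto. intro n. apply SA, Hz. Qed.

Lemma proj2_exists (R : Rel X) : is_subspace R -> closed_rel R -> exists P, is_proj2 R P.
Proof.
  intros SR CR.
  destruct (choice_fun (fun z p => is_proj_of (prod_hilbert X) (fun w => R (fst w) (snd w)) z p))
    as [P HP].
  { apply proj_exists; [apply rel_graph_subsp; auto | intros u l Hu L; apply (CR u l); auto]. }
  exists P. intro z. destruct (HP z) as [H1 H2]. split; auto.
  intros x f Hr. apply (H2 (x, f)). exact Hr.
Qed.

Lemma proj2_norm_le (R : Rel X) (P : X2 X -> X2 X) : is_proj2 R P -> forall z,
  norm2 (P z) <= norm2 z /\ norm2 (sub2 z (P z)) <= norm2 z.
Proof.
  intros HP z. destruct (HP z) as [Hin Ho].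
  assert (E : hinner (prod_hilbert X) (sub2 z (P z)) (P z) = C0).
  { simpl. rewrite (surjective_pairing (P z)) at 2. apply Ho; auto. }
  pose proof (norm_le_add_orth (prod_hilbert X) (P z) (sub2 z (P z)) E) as L.
  replace (hadd (prod_hilbert X) (P z) (sub2 z (P z))) with z in L by (apply pair_eq; simpl; vec_eq).
  exact L.
Qed.

Lemma proj2_components_le (R : Rel X) (P : X2 X -> X2 X) : is_proj2 R P -> forall z B,
  norm2 z <= B -> norm (fst (P z)) <= B /\ norm (snd (P z)) <= B.
Proof.
  intros HP z B Hz. destruct (proj2_norm_le R P HP z) as [Hle _].
  pose proof (norm_fst_le X (P z)). pose proof (norm_snd_le X (P z)). lra.
Qed.

Lemma proj2_fix (R : Rel X) (P : X2 X -> X2 X) : is_subspace R -> is_proj2 R P ->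
  forall x f, R x f -> P (x, f) = (x, f).
Proof.
  intros SR HP x f Hr. destruct (HP (x, f)) as [H1 H2].
  pose proof (H2 _ _ (rel_sub R SR _ _ _ _ Hr H1)) as E.
  apply (hinner_def (prod_hilbert X)) in E. symmetry.
  destruct (P (x, f)) as [p1 p2]. injection E. intros E2 E1. unfold vsub in E1, E2.
  apply pair_eq; simpl; apply eq_of_inner_sub0; intro y; [rewrite E1 | rewrite E2]; apply inner_0l.
Qed.

Lemma proj2_orth_sub (R : Rel X) (z1 z2 p1 p2 : X2 X) :
  (forall x f, R x f -> inner2 (sub2 z1 p1) (x, f) = C0) ->
  (forall x f, R x f -> inner2 (sub2 z2 p2) (x, f) = C0) ->
  forall x f, R x f -> inner2 (sub2 (sub2 z1 z2) (sub2 p1 p2)) (x, f) = C0.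
Proof.
  intros O1 O2 x f Hr. pose proof (O1 x f Hr) as E1. pose proof (O2 x f Hr) as E2.
  unfold inner2, sub2 in *. simpl in *. unfold vsub in *.
  inner_expand_in E1. inner_expand_in E2. inner_expand.
  apply Cx_eq; [apply (f_equal fst) in E1, E2 | apply (f_equal snd) in E1, E2]; cunfold; lra.
Qed.

End Relations.

(** * Consequences of [T = S + A] *)

Section Setting.
Variable X : CHilbert.
Variables T S A : Rel X.
Hypothesis HT : is_subspace T.
Hypothesis HS : is_subspace S.
Hypothesis HA : is_subspace A.
Hypothesis cT : closed_rel T.
Hypothesis hT : hermitian T.
Hypothesis cA : closed_rel A.
Hypothesis saS : selfadjoint S.
Hypothesis domTS : forall x, dom T x <-> dom S x.
Hypothesis domSA : forall x, dom S x -> dom A x.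
Hypothesis sumT : forall x h, T x h <-> rel_sum S A x h.

Notation S0 := (img S (hzero X)).
Notation "<< x , y >>" := (hinner X x y).

Lemma S0_subsp : subsp X S0.
Proof. exact (img0_subsp X S HS). Qed.

Lemma dom_S_perp_S0 x f : S x f -> perp X S0 x.
Proof.
  intros Hf m Hm. pose proof (selfadjoint_hermitian X S saS x f Hf (hzero X) m Hm) as E.
  rewrite inner_0r in E. symmetry. exact E.
Qed.

(* [(0, v) \in S^* = S] *)
Lemma S0_of_perp_dom v : (forall x, dom S x -> << v, x >> = C0) -> S0 v.
Proof. intro Hv. apply saS. intros x f Hf. rewrite inner_0l. apply Hv. exists f; auto. Qed.

Lemma T0_sub_S0 h : T (hzero X) h -> S0 h.
Proof.
  intros Hh. apply S0_of_perp_dom. intros x Dx.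
  destruct (proj2 (domTS x) Dx) as [f Hf].
  rewrite (hT _ _ Hh x f Hf). apply inner_0l.
Qed.

Lemma S0_sub_T0 h : S0 h -> T (hzero X) h.
Proof.
  intro Hh. apply sumT. exists h, (hzero X). split; [exact Hh | split; [apply HA | vec_eq]].
Qed.

Lemma A0_sub_S0 g : A (hzero X) g -> S0 g.
Proof.
  intro Hg. apply T0_sub_S0, sumT. exists (hzero X), g.
  split; [apply HS | split; [exact Hg | vec_eq]].
Qed.

Lemma proj_perp_S0_residual a q : is_proj_of X (perp X S0) a q -> S0 (vsub a q).
Proof.
  intros [_ Oq]. apply S0_of_perp_dom. intros x [f Hf]. apply Oq, (dom_S_perp_S0 x f Hf).
Qed.

Lemma QAs_perp_S0 x q : QAs S A x q -> perp X S0 q.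
Proof. intros [a [_ [P _]]]. exact P. Qed.

Lemma T_of_S_QAs x q f : QAs S A x q -> S x f -> T x (hadd X f q).
Proof.
  intros [a [Ha Pq]] Hf. apply sumT. exists (vsub f (vsub a q)), a.
  split; [| split; [apply Ha | vec_eq]].
  apply (rel_eq X S _ _ _ _ (rel_sub X S HS _ _ _ _ Hf (proj_perp_S0_residual a q Pq))); [vec_eq | auto].
Qed.

(* [h - f - A_s x \in S(0) + A(0) \subset S(0)], and [A_s x - Q A_s x \in S(0)]. *)
Lemma T_S_QAs_residual x q f h : QAs S A x q -> S x f -> T x h -> S0 (vsub (vsub h f) q).
Proof.
  intros [a [Ha Pq]] Hf Hh. apply sumT in Hh. destruct Hh as [f' [g [Hf' [Hg ->]]]].
  assert (M1 : S0 (vsub f' f)).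
  { apply (rel_eq X S _ _ _ _ (rel_sub X S HS _ _ _ _ Hf' Hf)); [vec_eq | auto]. }
  assert (M2 : S0 (vsub g a)).
  { apply A0_sub_S0, (rel_eq X A _ _ _ _ (rel_sub X A HA _ _ _ _ Hg (proj1 Ha))); [vec_eq | auto]. }
  replace (vsub (vsub (hadd X f' g) f) q)
    with (hadd X (hadd X (vsub f' f) (vsub g a)) (vsub a q)) by vec_eq.
  destruct S0_subsp as [_ [S0A _]].
  apply S0A; [apply S0A; auto | apply proj_perp_S0_residual; auto].
Qed.

Lemma QAs_symmetric x q f w r g :
  QAs S A x q -> QAs S A w r -> S x f -> S w g -> << q, w >> = << x, r >>.
Proof.
  intros Qx Qw Hf Hg.
  pose proof (hT _ _ (T_of_S_QAs x q f Qx Hf) w (hadd X g r) (T_of_S_QAs w r g Qw Hg)) as E1.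
  pose proof (selfadjoint_hermitian X S saS x f Hf w g Hg) as E2.
  rewrite hinner_addl, inner_addr, E2 in E1.
  destruct (<< x, g >>), (<< q, w >>), (<< x, r >>).
  unfold Cadd in E1. injection E1; intros. apply Cx_eq; simpl; lra.
Qed.

Lemma QAs_exists x : dom S x -> exists q, QAs S A x q.
Proof.
  intros Dx. destruct (domSA x Dx) as [g Hg].
  destruct (op_part_exists X A HA cA x g Hg) as [a Ha].
  destruct (proj_exists X (perp X S0) (perp_subsp X _) (perp_closed X _) a) as [q Pq].
  exists q, a. auto.
Qed.

Lemma QAs_sub x q y r : QAs S A x q -> QAs S A y r -> QAs S A (vsub x y) (vsub q r).
Proof.
  intros [a [Ha Pa]] [b [Hb Pb]]. exists (vsub a b).
  split; [apply op_part_sub | apply proj_of_sub]; auto. apply perp_subsp.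
Qed.

Lemma QAs_scal c x q : QAs S A x q -> QAs S A (hscal X c x) (hscal X c q).
Proof.
  intros [a [Ha Pa]]. exists (hscal X c a).
  split; [apply op_part_scal | apply proj_of_scal]; auto. apply perp_subsp.
Qed.

(* [<Q A_s x_n, w> = <x_n, Q A_s w>] for [w \in D(S)] puts [y] in [D(S)^perp = S(0)],
   while [y \perp S(0)] as a limit of the [Q A_s x_n]. *)
Lemma QAs_lim_null (xs fs qs : nat -> X) y : (forall n, S (xs n) (fs n)) ->
  (forall n, QAs S A (xs n) (qs n)) -> lim xs (hzero X) -> lim qs y -> y = hzero X.
Proof.
  intros Hf Hq Lx Lq.
  assert (Ry : forall w, dom S w -> Cre << y, w >> = 0).
  { intros w Dw. destruct (QAs_exists w Dw) as [r Hr]. destruct Dw as [g Hg].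
    apply abs_le_eps_eq0. intros eps He.
    destruct (re_inner_lim X qs y w Lq (eps / 2)) as [N1 HN1]; [lra |].
    destruct (re_inner_lim X xs (hzero X) r Lx (eps / 2)) as [N2 HN2]; [lra |].
    set (k := max N1 N2).
    specialize (HN1 k (Nat.le_max_l _ _)). specialize (HN2 k (Nat.le_max_r _ _)).
    rewrite <- (QAs_symmetric _ _ _ _ _ _ (Hq k) Hr (Hf k) Hg), inner_0l in HN2.
    change (Cre C0) with 0 in HN2. rewrite Rminus_0_r in HN2.
    replace (Cre << y, w >>) with (Cre << qs k, w >> - (Cre << qs k, w >> - Cre << y, w >>)) by ring.
    eapply Rle_trans; [apply Rabs_triang | rewrite Rabs_Ropp; lra]. }
  apply (perp_self_eq0 X S0).
  - apply S0_of_perp_dom, (perp_of_re X (dom S)); auto. apply dom_subsp, HS.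
  - apply (perp_closed X S0 qs y); auto. intro n. apply (QAs_perp_S0 (xs n)), Hq.
Qed.

Lemma QAs_unbounded_seq :
  ~ (exists C, 0 <= C /\ forall x f q, op_part S x f -> QAs S A x q ->
       norm f <= C * (norm x + norm (hadd X f q))) ->
  exists xs fs qs : nat -> X, (forall n, op_part S (xs n) (fs n)) /\ (forall n, QAs S A (xs n) (qs n)) /\
    (forall n, norm (fs n) = 1) /\ (forall n, norm (xs n) + norm (hadd X (fs n) (qs n)) <= / (INR n + 1)).
Proof.
  intro NC.
  assert (Ex : forall n : nat, exists t : X * X * X,
    op_part S (fst (fst t)) (snd (fst t)) /\ QAs S A (fst (fst t)) (snd t) /\
    (INR n + 1) * (norm (fst (fst t)) + norm (hadd X (snd (fst t)) (snd t))) < norm (snd (fst t))).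
  { intro n. apply NNPP. intro NE. apply NC. exists (INR n + 1). split; [pose proof (pos_INR n); lra |].
    intros x f q Hf Hq. apply Rnot_lt_le. intro L. apply NE. exists (x, f, q). auto. }
  destruct (choice_fun _ Ex) as [ts Hts].
  set (c := fun n => / norm (snd (fst (ts n)))).
  assert (Npos : forall n, 0 < norm (snd (fst (ts n)))).
  { intro n. destruct (Hts n) as [_ [_ L]]. pose proof (pos_INR n).
    pose proof (norm_ge0 X (fst (fst (ts n)))).
    pose proof (norm_ge0 X (hadd X (snd (fst (ts n))) (snd (ts n)))). nra. }
  assert (cpos : forall n, 0 < c n) by (intro n; apply Rinv_0_lt_compat; auto).
  exists (fun n => hscal X (c n, 0) (fst (fst (ts n)))), (fun n => hscal X (c n, 0) (snd (fst (ts n)))),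
    (fun n => hscal X (c n, 0) (snd (ts n))).
  split; [| split; [| split]]; intro n.
  - apply op_part_scal; auto. apply Hts.
  - apply QAs_scal, Hts.
  - rewrite norm_scal_real, Rabs_right by (left; apply cpos). unfold c. specialize (Npos n). field. lra.
  - destruct (Hts n) as [_ [_ L]].
    replace (hadd X (hscal X (c n, 0) (snd (fst (ts n)))) (hscal X (c n, 0) (snd (ts n))))
      with (hscal X (c n, 0) (hadd X (snd (fst (ts n))) (snd (ts n)))) by vec_eq.
    rewrite !norm_scal_real, Rabs_right by (left; apply cpos).
    pose proof (pos_INR n). specialize (Npos n).
    apply Rmult_le_reg_l with (INR n + 1); [lra |]. rewrite Rinv_r by lra.
    unfold c. apply Rmult_le_reg_r with (norm (snd (fst (ts n)))); [lra |].
    field_simplify; lra.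
Qed.

Lemma op_part_QAs_le_T x f q h : op_part S x f -> QAs S A x q -> T x h -> norm (hadd X f q) <= norm h.
Proof.
  intros Hf Hq Hh. apply op_part_iff in Hf. destruct Hf as [Hf Pf].
  replace h with (hadd X (hadd X f q) (vsub (vsub h f) q)) by vec_eq.
  apply (norm_le_add_perp X S0).
  - apply perp_subsp; auto. apply (QAs_perp_S0 x), Hq.
  - apply (T_S_QAs_residual x); auto.
Qed.

(* With [d = p - s], [d - (0, Q A_s p_1)] lies in [S + {0} x S(0)] and
   [d - (0, Q A_s s_1)] in [T]; expand [|d|^2 = <z - s, d> - <z - p, d>]. *)
Lemma proj_diff_sq_le (z p s : X2 X) kp ks :
  T (fst p) (snd p) -> S (fst s) (snd s) ->
  (forall x f, T x f -> inner2 (sub2 z p) (x, f) = C0) ->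
  (forall x f, S x f -> inner2 (sub2 z s) (x, f) = C0) ->
  QAs S A (fst p) kp -> QAs S A (fst s) ks ->
  norm2 (sub2 p s) * norm2 (sub2 p s) <=
    norm2 (sub2 z s) * norm (vsub kp ks) + norm2 (sub2 p s) * norm ks.
Proof.
  destruct p as [pa pal], s as [qb qbe]. simpl.
  intros Tp Sq OT OS Kp Ks.
  assert (Tt : T (vsub pa qb) (vsub (vsub pal qbe) ks)).
  { apply (rel_eq X T _ _ _ _ (rel_sub X T HT _ _ _ _ Tp (T_of_S_QAs _ _ _ Ks Sq))); [auto | vec_eq]. }
  assert (Dpa : dom S pa) by (apply domTS; exists pal; auto).
  destruct Dpa as [fp Hfp].
  pose proof (rel_sub X S HS _ _ _ _ Hfp Sq) as Hsg. set (sg := vsub fp qbe) in Hsg.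
  pose proof (T_S_QAs_residual _ _ _ _ (QAs_sub _ _ _ _ Kp Ks) Hsg Tt) as Mm.
  set (m := vsub (vsub (vsub (vsub pal qbe) ks) sg) (vsub kp ks)) in Mm.
  pose proof (OS _ _ Hsg) as E1. pose proof (OS _ _ Mm) as E2. pose proof (OT _ _ Tt) as E3.
  assert (EQ : Cre (inner2 (sub2 (pa, pal) (qb, qbe)) (sub2 (pa, pal) (qb, qbe))) =
     Cre (hinner X (snd (sub2 z (qb, qbe))) (vsub kp ks)) + Cre (hinner X (vsub pal qbe) ks)).
  { unfold m, inner2, sub2 in *. simpl in *. unfold vsub in *.
    inner_expand_in E1. inner_expand_in E2. inner_expand_in E3. inner_expand.
    apply (f_equal fst) in E1, E2, E3. cunfold. lra. }
  unfold norm2 at 1 2. rewrite sqrt_sqrt by apply (hinner_pos (prod_hilbert X)).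
  rewrite EQ. apply Rplus_le_compat.
  - eapply Rle_trans; [apply cauchy_schwarz |].
    apply Rmult_le_compat_r; [apply norm_ge0 | apply norm_snd_le].
  - eapply Rle_trans; [apply cauchy_schwarz |].
    apply Rmult_le_compat_r; [apply norm_ge0 | apply (norm_snd_le X (sub2 (pa, pal) (qb, qbe)))].
Qed.

Lemma proj_diff_cauchy (PT PS : X2 X -> X2 X) (z : nat -> X2 X) (B : R) (kp ks : nat -> X) :
  is_proj2 T PT -> is_proj2 S PS -> (forall n, norm2 (z n) <= B) ->
  (forall n, QAs S A (fst (PT (z n))) (kp n)) -> (forall n, QAs S A (fst (PS (z n))) (ks n)) ->
  cauchy X kp -> cauchy X ks -> cauchy (prod_hilbert X) (fun n => sub2 (PT (z n)) (PS (z n))).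
Proof.
  intros HPT HPS Hz Kp Ks Cp Cs eps He.
  assert (B0 : 0 <= B) by (eapply Rle_trans; [apply (norm_ge0 (prod_hilbert X) (z O)) | apply Hz]).
  set (del := eps * eps / (8 * B + 1)).
  assert (Hdel : 0 < del) by (unfold del; apply Rdiv_lt_0_compat; nra).
  destruct (Cs (del / 2)) as [N1 HN1]; [lra |]. destruct (Cp (del / 2)) as [N2 HN2]; [lra |].
  exists (max N1 N2). intros m n Hm Hn.
  pose proof (HN1 m n ltac:(lia) ltac:(lia)) as K1. pose proof (HN2 m n ltac:(lia) ltac:(lia)) as K2.
  pose proof (proj2_norm_le X T PT HPT) as BT. pose proof (proj2_norm_le X S PS HPS) as BS.
  set (p := sub2 (PT (z m)) (PT (z n))). set (s := sub2 (PS (z m)) (PS (z n))).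
  pose proof (proj_diff_sq_le (sub2 (z m) (z n)) p s (vsub (kp m) (kp n)) (vsub (ks m) (ks n))
    ltac:(unfold p; simpl; apply rel_sub; auto; apply HPT)
    ltac:(unfold s; simpl; apply rel_sub; auto; apply HPS)
    ltac:(unfold p; apply proj2_orth_sub; apply HPT) ltac:(unfold s; apply proj2_orth_sub; apply HPS)
    ltac:(unfold p; simpl; apply QAs_sub; auto) ltac:(unfold s; simpl; apply QAs_sub; auto)) as Key.
  change (norm2 (sub2 (sub2 (PT (z m)) (PS (z m))) (sub2 (PT (z n)) (PS (z n)))) < eps).
  replace (sub2 (sub2 (PT (z m)) (PS (z m))) (sub2 (PT (z n)) (PS (z n)))) with (sub2 p s)
    by (apply pair_eq; simpl; vec_eq).
  assert (Dp : norm2 (sub2 p s) <= 4 * B).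
  { replace (sub2 p s) with (sub2 (sub2 (PT (z m)) (PS (z m))) (sub2 (PT (z n)) (PS (z n))))
      by (apply pair_eq; simpl; vec_eq).
    pose proof (norm2_sub_le X (sub2 (PT (z m)) (PS (z m))) (sub2 (PT (z n)) (PS (z n)))).
    pose proof (norm2_sub_le X (PT (z m)) (PS (z m))). pose proof (norm2_sub_le X (PT (z n)) (PS (z n))).
    destruct (BT (z m)), (BT (z n)), (BS (z m)), (BS (z n)). pose proof (Hz m). pose proof (Hz n). lra. }
  assert (Dz : norm2 (sub2 (sub2 (z m) (z n)) s) <= 2 * B).
  { replace (sub2 (sub2 (z m) (z n)) s) with (sub2 (sub2 (z m) (PS (z m))) (sub2 (z n) (PS (z n))))
      by (apply pair_eq; simpl; vec_eq).
    pose proof (norm2_sub_le X (sub2 (z m) (PS (z m))) (sub2 (z n) (PS (z n)))).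
    destruct (BS (z m)), (BS (z n)). pose proof (Hz m). pose proof (Hz n). lra. }
  assert (Dk : norm (vsub (vsub (kp m) (kp n)) (vsub (ks m) (ks n))) <= del).
  { pose proof (norm_sub_le X (vsub (kp m) (kp n)) (vsub (ks m) (ks n))). lra. }
  pose proof (norm_ge0 (prod_hilbert X) (sub2 p s)). pose proof (norm_ge0 X (vsub (ks m) (ks n))).
  pose proof (norm_ge0 (prod_hilbert X) (sub2 (sub2 (z m) (z n)) s)).
  pose proof (norm_ge0 X (vsub (vsub (kp m) (kp n)) (vsub (ks m) (ks n)))).
  change (norm (X := prod_hilbert X) (sub2 p s)) with (norm2 (sub2 p s)) in *.
  change (norm (X := prod_hilbert X) (sub2 (sub2 (z m) (z n)) s))
    with (norm2 (sub2 (sub2 (z m) (z n)) s)) in *.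
  assert (norm2 (sub2 p s) * norm2 (sub2 p s) <= 8 * B * del) by nra.
  assert (8 * B * del < eps * eps).
  { unfold del. apply Rmult_lt_reg_r with (8 * B + 1); [lra |].
    replace (8 * B * (eps * eps / (8 * B + 1)) * (8 * B + 1)) with (8 * B * (eps * eps)) by (field; lra).
    nra. }
  nra.
Qed.

Section CompactQAs.
Hypothesis Kc : rel_compact (QAs S A) (op_part S).

(* A normalised sequence violating the bound would have [Q A_s x_n -> 0] along a
   subsequence, while [S_s x_n] stays of norm 1 and [S_s x_n + Q A_s x_n -> 0]. *)
Lemma QAs_relative_bound : exists C, 0 <= C /\ forall x f q, op_part S x f -> QAs S A x q ->
  norm f <= C * (norm x + norm (hadd X f q)).
Proof.
  apply NNPP. intro NC.
  destruct (QAs_unbounded_seq NC) as [xs [fs [qs [Hf [Hq [Nf Nxq]]]]]].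
  assert (Nx : forall n, norm (xs n) <= / (INR n + 1)).
  { intro n. pose proof (Nxq n). pose proof (norm_ge0 X (hadd X (fs n) (qs n))). lra. }
  destruct (Kc xs fs qs 2 Hf Hq) as [phi [y [Hphi Ly]]].
  { intro n. rewrite Nf. pose proof (Nx n). pose proof (inv_INR_succ_le1 n). lra. }
  assert (y0 : y = hzero X).
  { apply (QAs_lim_null (fun n => xs (phi n)) (fun n => fs (phi n)) (fun n => qs (phi n))); auto.
    - intro n. apply Hf.
    - apply lim_subseq; auto. apply lim_zero_of_norm_le_inv, Nx. }
  subst y. destruct (Ly (1 / 2)) as [N HN]; [lra |].
  set (k := max N 1). specialize (HN k (Nat.le_max_l _ _)).
  replace (vsub (qs (phi k)) (hzero X)) with (qs (phi k)) in HN by vec_eq.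
  pose proof (norm_le_add_norm X (fs (phi k)) (qs (phi k))) as Tri. rewrite Nf in Tri.
  pose proof (Nxq (phi k)). pose proof (norm_ge0 X (xs (phi k))).
  assert (/ (INR (phi k) + 1) <= / 2).
  { apply Rinv_le_contravar; [lra |]. pose proof (strict_incr_ge phi Hphi k).
    assert (K1 : (1 <= phi k)%nat) by (unfold k in *; lia). apply le_INR in K1. simpl in K1. lra. }
  lra.
Qed.

Lemma S_QAs_seq (xs : nat -> X) : (forall n, dom S (xs n)) ->
  exists fs qs : nat -> X, (forall n, op_part S (xs n) (fs n)) /\ (forall n, QAs S A (xs n) (qs n)).
Proof.
  intro Dx.
  destruct (choice_fun (fun n f => op_part S (xs n) f)) as [fs Hfs].
  { intro n. destruct (Dx n) as [g Hg].
    exact (op_part_exists X S HS (selfadjoint_closed X S saS) _ _ Hg). }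
  destruct (choice_fun (fun n q => QAs S A (xs n) q)) as [qs Hqs]; [intro n; apply QAs_exists, Dx |].
  exists fs, qs. auto.
Qed.

Lemma QAs_compact_perturbation : compact_perturbation T S.
Proof.
  intros PT PS HPT HPS z B Hz.
  destruct QAs_relative_bound as [C [C0 HC]].
  destruct (S_QAs_seq (fun n => fst (PT (z n)))) as [fa [ka [Hfa Hka]]].
  { intro n. apply domTS. exists (snd (PT (z n))). apply HPT. }
  destruct (S_QAs_seq (fun n => fst (PS (z n)))) as [fb [kb [Hfb Hkb]]].
  { intro n. exists (snd (PS (z n))). apply HPS. }
  assert (Na : forall n, norm (fst (PT (z n))) + norm (fa n) <= B + 2 * C * B).
  { intro n. pose proof (HC _ _ _ (Hfa n) (Hka n)).
    pose proof (op_part_QAs_le_T _ _ _ _ (Hfa n) (Hka n) (proj1 (HPT (z n)))).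
    destruct (proj2_components_le X T PT HPT (z n) B (Hz n)). nra. }
  assert (Nb : forall n, norm (fst (PS (z n))) + norm (fb n) <= 2 * B).
  { intro n. pose proof (op_part_norm_le X S HS _ _ _ (Hfb n) (proj1 (HPS (z n)))).
    destruct (proj2_components_le X S PS HPS (z n) B (Hz n)). lra. }
  destruct (Kc _ _ _ _ Hfb Hkb Nb) as [phi1 [l1 [Hp1 L1]]].
  destruct (Kc (fun n => fst (PT (z (phi1 n)))) (fun n => fa (phi1 n)) (fun n => ka (phi1 n))
    (B + 2 * C * B) (fun n => Hfa (phi1 n)) (fun n => Hka (phi1 n)) (fun n => Na (phi1 n)))
    as [phi2 [l2 [Hp2 L2]]].
  set (psi := fun n => phi1 (phi2 n)).
  destruct (cauchy_lim (prod_hilbert X) (fun n => sub2 (PT (z (psi n))) (PS (z (psi n))))) as [l Ll].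
  { apply (proj_diff_cauchy PT PS (fun n => z (psi n)) B (fun n => ka (psi n)) (fun n => kb (psi n)));
      auto.
    - apply (cauchy_of_lim X _ l2); auto.
    - apply (cauchy_of_lim X _ l1), (lim_subseq X (fun n => kb (phi1 n))); auto. }
  exists psi, l. exact (conj (strict_incr_comp phi1 phi2 Hp1 Hp2) Ll).
Qed.

End CompactQAs.

Section BoundedOperatorPart.
Variable Cb : R.
Hypothesis Cb_ge0 : 0 <= Cb.
Hypothesis HB : forall x f, op_part T x f -> norm f <= Cb * norm x.

(* [T_s (z_1 - p_1)] and [Q A_s z_1 + (z_2 - p_2)] are both [T]-images of [z_1 - p_1]
   orthogonal to [T(0) = S(0)], hence equal. *)
Lemma QAs_le_dist_T (z p : X2 X) u : T (fst p) (snd p) ->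
  (forall x f, T x f -> inner2 (sub2 z p) (x, f) = C0) ->
  S (fst z) (snd z) -> QAs S A (fst z) u -> norm u <= (Cb + 1) * norm2 (sub2 p z).
Proof.
  intros Tp Op Sz Qz.
  set (b := vsub (fst z) (fst p)). set (c := vsub (snd z) (snd p)).
  assert (Tb : T b (hadd X c u)).
  { apply (rel_eq X T _ _ _ _ (rel_sub X T HT _ _ _ _ (T_of_S_QAs _ _ _ Qz Sz) Tp));
      [auto | unfold c; vec_eq]. }
  assert (Pc : perp X S0 c).
  { intros m Hm. unfold c. pose proof (Op _ _ (S0_sub_T0 m Hm)) as E.
    unfold inner2, sub2 in E. simpl in E. rewrite inner_0r in E. rewrite <- E. cring. }
  destruct (op_part_exists X T HT cT _ _ Tb) as [fT HfT].
  pose proof (HB _ _ HfT) as NfT.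
  apply op_part_iff in HfT. destruct HfT as [TfT PfT].
  assert (PfT' : perp X S0 fT) by (intros m Hm; apply PfT, S0_sub_T0, Hm).
  assert (Eu : u = vsub fT c).
  { pose proof (perp_subsp X S0) as SP.
    assert (W0 : vsub (hadd X c u) fT = hzero X).
    { apply (perp_self_eq0 X S0).
      - apply T0_sub_S0, (rel_eq X T _ _ _ _ (rel_sub X T HT _ _ _ _ Tb TfT)); [vec_eq | auto].
      - apply subsp_sub; auto. apply SP; auto. apply (QAs_perp_S0 _ _ Qz). }
    apply eq_of_inner_sub0. intro y.
    replace (hadd X u (hopp X (vsub fT c))) with (vsub (hadd X c u) fT) by vec_eq.
    rewrite W0. apply inner_0l. }
  rewrite Eu. eapply Rle_trans; [apply norm_sub_le |].
  pose proof (norm_fst_le X (sub2 p z)); pose proof (norm_snd_le X (sub2 p z)).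
  simpl in *. rewrite norm_sub_sym in *. fold b c in H, H0.
  pose proof (norm_ge0 X b). nra.
Qed.

Lemma bounded_perturbation_QAs_compact :
  compact_perturbation T S -> rel_compact (QAs S A) (op_part S).
Proof.
  intros CP xs ys us Mb Hy Hu Hb.
  destruct (proj2_exists X T HT cT) as [PT HPT].
  destruct (proj2_exists X S HS (selfadjoint_closed X S saS)) as [PS HPS].
  set (s := fun n => (xs n, ys n)).
  destruct (CP PT PS HPT HPS s Mb) as [phi [l [Hphi Ll]]].
  { intro n. eapply Rle_trans; [apply norm2_le | apply Hb]. }
  set (e := fun n => sub2 (PT (s n)) (s n)).
  assert (Ee : forall n, sub2 (PT (s n)) (PS (s n)) = e n).
  { intro n. unfold e, s. rewrite (proj2_fix X S PS HS HPS (xs n) (ys n)); auto. apply Hy. }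
  assert (Ce : cauchy (prod_hilbert X) (fun n => e (phi n))).
  { apply (cauchy_of_lim (prod_hilbert X) _ l). intros eps He. destruct (Ll eps He) as [N HN].
    exists N. intros n Hn. rewrite <- Ee. apply HN, Hn. }
  assert (Bu : forall m n, norm (vsub (us m) (us n)) <= (Cb + 1) * norm2 (sub2 (e m) (e n))).
  { intros m n.
    replace (sub2 (e m) (e n)) with (sub2 (sub2 (PT (s m)) (PT (s n))) (sub2 (s m) (s n)))
      by (apply pair_eq; simpl; vec_eq).
    apply QAs_le_dist_T; simpl.
    - apply rel_sub; auto; apply HPT.
    - apply proj2_orth_sub; apply HPT.
    - apply rel_sub; auto; apply Hy.
    - apply QAs_sub; auto. }
  destruct (cauchy_lim X (fun n => us (phi n))) as [lu Lu].
  { intros eps He. destruct (Ce (eps / (Cb + 1))) as [N HN]; [apply Rdiv_lt_0_compat; lra |].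
    exists N. intros m n Hm Hn. eapply Rle_lt_trans; [apply Bu |].
    specialize (HN m n Hm Hn). change (norm2 (sub2 (e (phi m)) (e (phi n))) < eps / (Cb + 1)) in HN.
    apply Rmult_lt_compat_l with (r := Cb + 1) in HN; [| lra].
    replace ((Cb + 1) * (eps / (Cb + 1))) with eps in HN by (field; lra). exact HN. }
  exists phi, lu. auto.
Qed.

End BoundedOperatorPart.

End Setting.

Theorem theorem3p5 (X : CHilbert) (T S A : Rel X) :
  is_subspace T -> is_subspace S -> is_subspace A ->
  closed_rel T -> hermitian T ->
  closed_rel A -> hermitian A ->
  selfadjoint S ->
  (forall x, dom T x <-> dom S x) ->
  (forall x, dom S x -> dom A x) ->
  (forall x h, T x h <-> rel_sum S A x h) ->
  (exists lam, in_resolvent lam T /\ in_resolvent lam S) ->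
  (rel_compact (QAs S A) (op_part S) -> compact_perturbation T S) /\
  (compact_perturbation T S -> bounded_rel (op_part T) ->
     rel_compact (QAs S A) (op_part S)).
Proof.
  intros HT HS HA cT hT cA _ saS domTS domSA sumT _. split.
  - apply QAs_compact_perturbation; auto.
  - intros CP [Cb HB].
    apply (bounded_perturbation_QAs_compact X T S A HT HS HA cT hT saS domTS sumT (Rmax Cb 0)); auto.
    + apply Rmax_r.
    + intros x f Hf. eapply Rle_trans; [apply (HB x f Hf) |].
      apply Rmult_le_compat_r; [apply norm_ge0 | apply Rmax_l].
Qed.
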